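(* Let $K$ be a binomial principal ideal domain and $G$ a finitely generated regular nilpotent $K$-group. Then $G\cong H\times G_0$ for any addition $G_0$ and any foundation $H$ (not necessarily associated with each other); consequently all foundations of $G$ are isomorphic to each other and all additions of $G$ are isomorphic to each other.
   Context: $K$ binomial: a characteristic-zero domain with unique binomial coefficients $\binom{k}{n}\in K$; $K$-groups are Hall's nilpotent groups with exponents in $K$. $Is(N)=\{x\in G: x^\alpha\in N\text{ for some }0\ne\alpha\in K\}$; $I(G)=Is(G')\cap Z(G)$. An addition is a $K$-subgroup $G_0\le Z(G)$ with $Z(G)=G_0\oplus I(G)$. $G$ is regular if $G=H\times G_0$ for an addition $G_0$ and a $K$-subgroup $H$ with $Is(H')\ge Z(H)$; for a regular group, such a subgroup $H$ (identified with $G/G_0$) is also called a foundation. *)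

From Stdlib Require List.
From HB Require Import structures.
From mathcomp Require Import all_boot all_order all_algebra.
Set Implicit Arguments. Unset Strict Implicit. Unset Printing Implicit Defensive.
Import GRing.Theory.
Local Open Scope ring_scope.

Definition char_zero (K : idomainType) : Prop :=
  forall n : nat, (0 < n)%N -> (n%:R : K) != 0.

Definition binomial_coeffs (K : idomainType) (bin : K -> nat -> K) : Prop :=
  forall (a : K) (n : nat), (n`!)%:R * bin a n = \prod_(i < n) (a - i%:R).

Definition ideal (K : idomainType) (I : K -> Prop) : Prop :=
  I 0 /\ (forall x y, I x -> I y -> I (x + y)) /\ (forall r x, I x -> I (r * x)).

Definition principal_ideal_domain (K : idomainType) : Prop :=
  forall I : K -> Prop, ideal I -> exists a : K, forall x, I x <-> exists r, x = r * a.

Definition rprod {T : Type} (mul : T -> T -> T) (one : T) (s : seq T) : T :=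
  foldr mul one s.

Fixpoint rnpow {T : Type} (mul : T -> T -> T) (one : T) (x : T) (n : nat) : T :=
  match n with 0%N => one | n'.+1 => mul x (rnpow mul one x n') end.

Definition rcomm {T : Type} (mul : T -> T -> T) (inv : T -> T) (x y : T) : T :=
  mul (inv x) (mul (inv y) (mul x y)).

Inductive rgen {T : Type} (mul : T -> T -> T) (inv : T -> T) (one : T)
    (S : T -> Prop) : T -> Prop :=
  | rgen_in x : S x -> rgen mul inv one S x
  | rgen_one : rgen mul inv one S one
  | rgen_mul x y : rgen mul inv one S x -> rgen mul inv one S y -> rgen mul inv one S (mul x y)
  | rgen_inv x : rgen mul inv one S x -> rgen mul inv one S (inv x).

(* lower central series: rlcs i = gamma_{i+1} *)
Fixpoint rlcs {T : Type} (mul : T -> T -> T) (inv : T -> T) (one : T) (i : nat) : T -> Prop :=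
  match i with
  | 0%N => fun _ => True
  | i'.+1 => rgen mul inv one
               (fun z => exists x y, rlcs mul inv one i' x /\ z = rcomm mul inv x y)
  end.

Definition rnil_class {T : Type} (mul : T -> T -> T) (inv : T -> T) (one : T) (c : nat) : Prop :=
  forall x, rlcs mul inv one c x -> x = one.

(* Hall-Petresco words: rtaus xs m = [:: tau_1; ...; tau_m], determined by
   x_1^m ... x_n^m = tau_1^C(m,1) tau_2^C(m,2) ... tau_m^C(m,m). *)
Fixpoint rtaus {T : Type} (mul : T -> T -> T) (inv : T -> T) (one : T)
    (xs : seq T) (m : nat) : seq T :=
  match m with
  | 0%N => [::]
  | m'.+1 =>
      let ts := rtaus mul inv one xs m' in
      rcons ts
        (mul (inv (rprod mul one [seq rnpow mul one (nth one ts i) 'C(m, i.+1) | i <- iota 0 m']))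
             (rprod mul one [seq rnpow mul one x m | x <- xs]))
  end.

Record KGroup (K : idomainType) (bin : K -> nat -> K) := KGroupPack {
  kcar :> Type;
  kmul : kcar -> kcar -> kcar;
  kinv : kcar -> kcar;
  kone : kcar;
  kpow : kcar -> K -> kcar;
  kmulA : forall x y z, kmul x (kmul y z) = kmul (kmul x y) z;
  kmul1g : forall x, kmul kone x = x;
  kmulVg : forall x, kmul (kinv x) x = kone;
  kpow1 : forall x, kpow x 1 = x;
  kpowD : forall x a b, kpow x (a + b) = kmul (kpow x a) (kpow x b);
  kpowM : forall x a b, kpow (kpow x a) b = kpow x (a * b);
  kpowJ : forall x y a,
      kpow (kmul (kinv y) (kmul x y)) a = kmul (kinv y) (kmul (kpow x a) y);
  knil : exists c : nat, rnil_class kmul kinv kone c /\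
      forall (xs : seq kcar) (a : K),
        rprod kmul kone [seq kpow x a | x <- xs]
        = rprod kmul kone [seq kpow (nth kone (rtaus kmul kinv kone xs c) i) (bin a i.+1)
                          | i <- iota 0 c]
}.

Arguments kmul {K bin} k.
Arguments kinv {K bin} k.
Arguments kone {K bin} k.
Arguments kpow {K bin} k.

Section KGroupNotions.
Variables (K : idomainType) (bin : K -> nat -> K) (G : KGroup bin).

Definition kcomm (x y : G) : G := rcomm (kmul G) (kinv G) x y.
Definition kconj (x y : G) : G := kmul G (kinv G y) (kmul G x y).

Inductive kgen (S : G -> Prop) : G -> Prop :=
  | kgen_in x : S x -> kgen S x
  | kgen_one : kgen S (kone G)
  | kgen_mul x y : kgen S x -> kgen S y -> kgen S (kmul G x y)
  | kgen_inv x : kgen S x -> kgen S (kinv G x)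
  | kgen_pow x a : kgen S x -> kgen S (kpow G x a).

Definition ksub (S : G -> Prop) : Prop :=
  S (kone G) /\ (forall x y, S x -> S y -> S (kmul G x y)) /\
  (forall x, S x -> S (kinv G x)) /\ (forall x a, S x -> S (kpow G x a)).

Definition knormal (S : G -> Prop) : Prop := forall x y, S x -> S (kconj x y).

Definition kcentre_of (H : G -> Prop) (x : G) : Prop :=
  H x /\ forall y, H y -> kmul G x y = kmul G y x.
Definition kcentre : G -> Prop := kcentre_of (fun _ => True).

Definition kderived (H : G -> Prop) : G -> Prop :=
  kgen (fun z => exists x y, H x /\ H y /\ z = kcomm x y).

Definition isol (N : G -> Prop) (x : G) : Prop := exists a : K, a != 0 /\ N (kpow G x a).

Definition Iset (x : G) : Prop := isol (kderived (fun _ => True)) x /\ kcentre x.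

Definition addition (G0 : G -> Prop) : Prop :=
  ksub G0 /\ (forall x, G0 x -> kcentre x) /\
  (forall z, kcentre z <-> exists a b, G0 a /\ Iset b /\ z = kmul G a b) /\
  (forall x, G0 x -> Iset x -> x = kone G).

Definition kdprod (H G0 : G -> Prop) : Prop :=
  ksub H /\ ksub G0 /\ knormal H /\ knormal G0 /\
  (forall x, H x -> G0 x -> x = kone G) /\
  (forall g, exists h z, H h /\ G0 z /\ g = kmul G h z).

Definition foundation_cond (H : G -> Prop) : Prop :=
  forall x, kcentre_of H x -> isol (kderived H) x.

Definition regular : Prop :=
  exists H G0, addition G0 /\ kdprod H G0 /\ foundation_cond H.

Definition foundation (H : G -> Prop) : Prop :=
  exists G0, addition G0 /\ kdprod H G0 /\ foundation_cond H.

Definition fin_gen : Prop :=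
  exists s : seq G, forall x, kgen (fun y => List.In y s) x.

Definition kiso_sub (A B : G -> Prop) : Prop :=
  exists f : G -> G,
    (forall x, A x -> B (f x)) /\
    (forall x y, A x -> A y -> f (kmul G x y) = kmul G (f x) (f y)) /\
    (forall x a, A x -> f (kpow G x a) = kpow G (f x) a) /\
    (forall x y, A x -> A y -> f x = f y -> x = y) /\
    (forall y, B y -> exists x, A x /\ f x = y).

(* G is K-isomorphic to the external direct product H x G0 of K-subgroups:
   an isomorphism g |-> (h g, z g) *)
Definition kiso_prod (H G0 : G -> Prop) : Prop :=
  exists h z : G -> G,
    (forall x, H (h x)) /\ (forall x, G0 (z x)) /\
    (forall x y, h (kmul G x y) = kmul G (h x) (h y)) /\
    (forall x y, z (kmul G x y) = kmul G (z x) (z y)) /\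
    (forall x a, h (kpow G x a) = kpow G (h x) a) /\
    (forall x a, z (kpow G x a) = kpow G (z x) a) /\
    (forall x y, h x = h y -> z x = z y -> x = y) /\
    (forall a b, H a -> G0 b -> exists x, h x = a /\ z x = b).

End KGroupNotions.

(* Let G be a regular K-group, G0 an addition and H a foundation of G.  The
   proof shows that G is the internal direct product of H and G0, each
   factor centralising the other.  Hall's product axiom for the commuting
     pair [x; y] collapses to (xy)^a = x^a y^a.
   - Commuting direct decompositions G = P x Q.  Two complements R and P
     of the same factor Q are K-isomorphic, through the projection onto P.
   - Regular groups.  The subgroup I(G) = Is(G') cap Z(G) lies in every
     foundation.  Hence every foundation H and every addition G0 decompose G.
   The theorem then follows by comparing decompositions that share a factor. *)
From HB Require Import structures.
From mathcomp Require Import all_boot all_order all_algebra.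
From Stdlib Require Import ClassicalEpsilon.
Set Implicit Arguments. Unset Strict Implicit. Unset Printing Implicit Defensive.
Local Open Scope ring_scope.
Import GRing.Theory.

Section KGroupTheory.
Variables (K : idomainType) (bin : K -> nat -> K) (G : KGroup bin).
Local Notation mul := (kmul G).
Local Notation inv := (kinv G).
Local Notation one := (kone G).
Local Notation pw := (kpow G).

Lemma kmulgV (x : G) : mul x (inv x) = one.
Proof.
rewrite -{1}(kmul1g (mul x (inv x))) -{1}(kmulVg (inv x)).
by rewrite -kmulA (kmulA (inv x)) kmulVg kmul1g kmulVg.
Qed.

Lemma kmulg1 (x : G) : mul x one = x.
Proof. by rewrite -(kmulVg x) kmulA kmulgV kmul1g. Qed.

Lemma kmulKg (x y : G) : mul (inv x) (mul x y) = y.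
Proof. by rewrite kmulA kmulVg kmul1g. Qed.

Lemma kmulKVg (x y : G) : mul x (mul (inv x) y) = y.
Proof. by rewrite kmulA kmulgV kmul1g. Qed.

Lemma kmulgK (x y : G) : mul (mul y x) (inv x) = y.
Proof. by rewrite -kmulA kmulgV kmulg1. Qed.

Lemma kmulgI (x y z : G) : mul x y = mul x z -> y = z.
Proof. by move=> e; rewrite -(kmulKg x y) e kmulKg. Qed.

Lemma kinv1 : inv one = one.
Proof. by rewrite -{2}(kmulgV one) kmul1g. Qed.

Lemma kpow0 (x : G) : pw x 0 = one.
Proof.
have e := kpowD x 0 0; rewrite addr0 in e.
by apply: (@kmulgI (pw x 0)); rewrite kmulg1 -e.
Qed.

Lemma kpowN1 (x : G) : pw x (-1) = inv x.
Proof.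
have e := kpowD x 1 (-1); rewrite subrr kpow0 kpow1 in e.
by rewrite -(kmulKg x (pw x (-1))) -e kmulg1.
Qed.

Lemma kone_pow (a : K) : pw one a = one.
Proof. by rewrite -{1}(kpow0 one) kpowM mul0r kpow0. Qed.

Lemma kpowV (x : G) (a : K) : pw (inv x) a = inv (pw x a).
Proof. by rewrite -kpowN1 kpowM -kpowN1 kpowM mulrC. Qed.

Definition central (x : G) : Prop := forall y, mul x y = mul y x.

Lemma kcentreP (x : G) : kcentre x <-> central x.
Proof. by split=> [[_ cx] y | cx]; [apply: cx | split=> // y _; apply: cx]. Qed.

Lemma centralV (x : G) : central x -> central (inv x).
Proof. by move=> cx y; apply: (@kmulgI x); rewrite kmulKVg kmulA cx kmulgK. Qed.

Lemma centralM (x y : G) : central x -> central y -> central (mul x y).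
Proof. by move=> cx cy z; rewrite -kmulA cy kmulA cx kmulA. Qed.

Lemma rnpow_one (n : nat) : rnpow mul one one n = one.
Proof. by elim: n => //= n ->; rewrite kmulg1. Qed.

Lemma rnpow_comm (x y : G) (n : nat) : mul x y = mul y x ->
  rnpow mul one (mul x y) n = mul (rnpow mul one x n) (rnpow mul one y n).
Proof.
move=> cxy; have cy m : mul y (rnpow mul one x m) = mul (rnpow mul one x m) y.
  elim: m => [|m IH] /=; first by rewrite kmulg1 kmul1g.
  by rewrite kmulA -cxy -kmulA IH kmulA.
elim: n => [|n IH] /=; first by rewrite kmulg1.
by rewrite IH -kmulA (kmulA y) cy -!kmulA.
Qed.

Lemma rprod_map_one (T : eqType) (F : T -> G) (s : seq T) :
  (forall i, i \in s -> F i = one) -> rprod mul one (map F s) = one.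
Proof.
elim: s => //= i s IH F1.
by rewrite F1 ?mem_head // kmul1g IH // => j sj; rewrite F1 // in_cons sj orbT.
Qed.

Lemma nth_tail_one (t : G) (m i : nat) : (0 < i)%N ->
  nth one (t :: nseq m one) i = one.
Proof. by case: i => // i _; rewrite /= nth_nseq if_same. Qed.

Lemma in_iota_pos (k n i : nat) : i \in iota k.+1 n -> (0 < i)%N.
Proof. by rewrite mem_iota => /andP [/(leq_trans _)-> ]. Qed.

Lemma rtaus_S (xs : seq G) (m : nat) : rtaus mul inv one xs m.+1 =
  rcons (rtaus mul inv one xs m)
   (mul (inv (rprod mul one
          [seq rnpow mul one (nth one (rtaus mul inv one xs m) i) 'C(m.+1, i.+1)
          | i <- iota 0 m]))
        (rprod mul one [seq rnpow mul one x m.+1 | x <- xs])).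
Proof. by []. Qed.

Lemma rtaus_comm (x y : G) (m : nat) : mul x y = mul y x ->
  rtaus mul inv one [:: x; y] m.+1 = mul x y :: nseq m one.
Proof.
move=> cxy; elim: m => [|m IH]; first by rewrite /= kinv1 kmul1g !kmulg1.
rewrite rtaus_S IH.
have -> : iota 0 m.+1 = 0%N :: iota 1 m by [].
rewrite map_cons /= rprod_map_one; last first.
  by move=> i /in_iota_pos i_gt0; rewrite nth_tail_one // rnpow_one.
rewrite bin1 !kmulg1 (rnpow_comm m.+2 cxy) /= kmulVg.
by rewrite -cats1 -[[:: one]]/(nseq 1 one) -nseqD addn1.
Qed.

Hypothesis hbin : binomial_coeffs bin.

Lemma bin_1 (a : K) : bin a 1 = a.
Proof. by have := hbin a 1; rewrite big_ord1 subr0 mul1r. Qed.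

(* Hall's product axiom applied to a commuting pair: K-powers distribute
   over products of commuting elements. *)
Lemma kpow_commM (x y : G) (a : K) : mul x y = mul y x ->
  pw (mul x y) a = mul (pw x a) (pw y a).
Proof.
move=> cxy; case: (knil G) => -[|c] [nil hall].
  by rewrite (nil (pw _ _) I) (nil (mul _ _) I).
have := hall [:: x; y] a; rewrite rtaus_comm //.
have -> : iota 0 c.+1 = 0%N :: iota 1 c by [].
rewrite map_cons /= rprod_map_one; last first.
  by move=> i /in_iota_pos i_gt0; rewrite nth_tail_one // kone_pow.
by rewrite bin_1 !kmulg1 => ->.
Qed.

Definition cdprod (P Q : G -> Prop) : Prop :=
  [/\ ksub P, ksub Q, (forall p q, P p -> Q q -> mul p q = mul q p),
      (forall x, P x -> Q x -> x = one) &
      (forall g, exists p q, P p /\ Q q /\ g = mul p q)].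

Lemma cdprod_sym (P Q : G -> Prop) : cdprod P Q -> cdprod Q P.
Proof.
case=> hP hQ cPQ tPQ gPQ; split=> //.
- by move=> q p hq hp; rewrite (cPQ p q).
- by move=> x hq hp; apply: tPQ.
move=> g; have [p [q [hp [hq ->]]]] := gPQ g.
by exists q, p; rewrite cPQ.
Qed.

Section Projections.
Variables (P Q : G -> Prop).
Hypothesis hPQ : cdprod P Q.

Lemma cdprod_unique (p q p' q' : G) : P p -> Q q -> P p' -> Q q' ->
  mul p q = mul p' q' -> p = p' /\ q = q'.
Proof.
case: hPQ => [[_ [PM [PV _]]] [_ [QM [QV _]]] _ tPQ _] hp hq hp' hq' e.
have e2 : mul (inv p') p = mul q' (inv q).
  by rewrite -[q'](kmulKg p') -e !kmulA kmulgK.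
have e1 : mul (inv p') p = one.
  by apply: tPQ; [apply: PM => //; apply: PV | rewrite e2; apply: QM => //; apply: QV].
split; first by rewrite -(kmulKVg p' p) e1 kmulg1.
have -> : q' = mul (mul q' (inv q)) q by rewrite -kmulA kmulVg kmulg1.
by rewrite -e2 e1 kmul1g.
Qed.

(* Every element has a factorisation, packaged for the choice operator. *)
Lemma cdprod_pairs (g : G) : exists r : G * G, [/\ P r.1, Q r.2 & g = mul r.1 r.2].
Proof. by case: hPQ => _ _ _ _ /(_ g) [p [q [hp [hq ->]]]]; exists (p, q). Qed.

Definition dsplit (g : G) : G * G :=
  proj1_sig (constructive_indefinite_description _ (cdprod_pairs g)).
Definition dpr1 (g : G) : G := (dsplit g).1.
Definition dpr2 (g : G) : G := (dsplit g).2.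

Lemma dprP (g : G) : [/\ P (dpr1 g), Q (dpr2 g) & g = mul (dpr1 g) (dpr2 g)].
Proof. by rewrite /dpr1 /dpr2 /dsplit; case: constructive_indefinite_description. Qed.

Lemma dpr_factors (p q : G) : P p -> Q q -> dpr1 (mul p q) = p /\ dpr2 (mul p q) = q.
Proof.
by move=> hp hq; have [h1 h2 e] := dprP (mul p q); apply: cdprod_unique; rewrite -?e.
Qed.

(* Both projections are K-homomorphisms: for products this uses that the
   factors commute, for powers also Hall's axiom through kpow_commM. *)
Lemma dpr_mul (x y : G) :
  dpr1 (mul x y) = mul (dpr1 x) (dpr1 y) /\ dpr2 (mul x y) = mul (dpr2 x) (dpr2 y).
Proof.
case: hPQ => [[_ [PM _]] [_ [QM _]] cPQ _ _].
have [px qx ex] := dprP x; have [py qy ey] := dprP y.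
have -> : mul x y = mul (mul (dpr1 x) (dpr1 y)) (mul (dpr2 x) (dpr2 y)).
  rewrite {1}ex {1}ey -!kmulA; congr (mul _ _).
  by rewrite kmulA -(cPQ _ _ py qx) -kmulA.
by apply: dpr_factors; [apply: PM | apply: QM].
Qed.

Lemma dpr_pow (x : G) (a : K) :
  dpr1 (pw x a) = pw (dpr1 x) a /\ dpr2 (pw x a) = pw (dpr2 x) a.
Proof.
case: hPQ => [[_ [_ [_ PX]]] [_ [_ [_ QX]]] cPQ _ _].
have [px qx ex] := dprP x.
have -> : pw x a = mul (pw (dpr1 x) a) (pw (dpr2 x) a).
  by rewrite {1}ex kpow_commM // cPQ.
by apply: dpr_factors; [apply: PX | apply: QX].
Qed.

Lemma cdprod_kiso_prod : kiso_prod P Q.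
Proof.
exists dpr1, dpr2; do !split.
- by move=> x; case: (dprP x).
- by move=> x; case: (dprP x).
- by move=> x y; case: (dpr_mul x y).
- by move=> x y; case: (dpr_mul x y).
- by move=> x a; case: (dpr_pow x a).
- by move=> x a; case: (dpr_pow x a).
- move=> x y e1 e2; have [_ _ ->] := dprP x; have [_ _ ->] := dprP y.
  by rewrite e1 e2.
by move=> p q hp hq; exists (mul p q); apply: dpr_factors.
Qed.

(* Any other complement R of Q is mapped isomorphically onto P by the
   projection onto P. *)
Lemma cdprod_complement_iso (R : G -> Prop) : cdprod R Q -> kiso_sub R P.
Proof.
case=> [[_ [RM [RV _]]] [_ [QM [QV _]]] _ tRQ gRQ].
exists dpr1; do !split.
- by move=> x _; case: (dprP x).
- by move=> x y _ _; case: (dpr_mul x y).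
- by move=> x a _; case: (dpr_pow x a).
- move=> x y hx hy e; set w := mul (inv (dpr2 x)) (dpr2 y).
  have [_ qx ex] := dprP x; have [_ qy ey'] := dprP y.
  have ey : y = mul x w by rewrite /w {1}ex -kmulA kmulKVg e -ey'.
  have w1 : w = one.
    apply: tRQ; last by apply: QM => //; apply: QV.
    by rewrite -[w](kmulKg x) -ey; apply: RM => //; apply: RV.
  by rewrite ey w1 kmulg1.
move=> y hy; have [r [q [hr [hq ey]]]] := gRQ y.
exists r; split=> //.
have -> : r = mul y (inv q) by rewrite ey kmulgK.
by case: (dpr_factors hy (QV _ hq)).
Qed.
End Projections.

Lemma kderived_sub (H : G -> Prop) (x : G) :
  kderived H x -> kderived (fun _ => True) x.
Proof.
elim=> [z [a [b [_ [_ ->]]]]| |a b _ ha _ hb|a _ ha|a c _ ha].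
- by apply: kgen_in; exists a, b.
- exact: kgen_one.
- exact: kgen_mul.
- exact: kgen_inv.
- exact: kgen_pow.
Qed.

Lemma foundation_central_isol (H : G -> Prop) (x : G) :
  foundation_cond H -> H x -> central x -> isol (kderived (fun _ => True)) x.
Proof.
move=> fH hx cx; have [a [a0 ha]] : isol (kderived H) x.
  by apply: fH; split=> // y _; apply: cx.
by exists a; split=> //; apply: kderived_sub ha.
Qed.

(* I(G) is contained in every foundation H: writing b in I(G) as b = h z with
   h in H and z in the complementary addition G1, the element z = h^-1 b lies
   in Is(G') cap Z(G) = I(G), and G1 meets I(G) trivially. *)
Lemma Iset_sub_foundation (H G1 : G -> Prop) :
  addition G1 -> kdprod H G1 -> foundation_cond H -> forall b, Iset b -> H b.
Proof.
move=> [_ [G1c [_ G1I]]] [_ [_ [_ [_ [_ gHG1]]]]] fH b [[be [be0 hbe]] /kcentreP cb].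
have [h [z [hh [hz eb]]]] := gHG1 b.
have cz : central z by apply/kcentreP/G1c.
have ch : central h by rewrite -[h](kmulgK z) -eb; apply/centralM/centralV.
have [al [al0 hal]] := foundation_central_isol fH hh ch.
have ez : z = mul (inv h) b by rewrite eb kmulKg.
have zI : Iset z.
  split; last exact/kcentreP.
  exists (al * be); split; first by rewrite mulf_neq0.
  rewrite ez kpow_commM; last exact: centralV.
  rewrite kpowV -kpowM mulrC -kpowM.
  by apply: kgen_mul; [apply/kgen_inv/kgen_pow | apply: kgen_pow].
by rewrite eb (G1I z hz zI) kmulg1.
Qed.

Lemma addition_foundation_cdprod (G0 H : G -> Prop) :
  addition G0 -> foundation H -> cdprod H G0.
Proof.
move=> [sG0 [G0c [ZG0I G0I]]] [G1 [addG1 [dHG1 fH]]].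
have IH := Iset_sub_foundation addG1 dHG1 fH.
have [sH [_ [_ [_ [_ gHG1]]]]] := dHG1.
have [_ [G1c _]] := addG1.
have cG0 x : G0 x -> central x by move/G0c/kcentreP.
split=> //.
- by move=> p q _ /cG0 cq; rewrite cq.
- move=> x hx /[dup] /G0I x1 /cG0 cx; apply: x1; split; last exact/kcentreP.
  exact: foundation_central_isol fH hx cx.
move=> g; have [h [z [hh [hz eg]]]] := gHG1 g.
have [a [b [ha [hb ez]]]] := (ZG0I z).1 (G1c z hz).
exists (mul h b), a; split; first by case: sH => [_ [HM _]]; apply: HM => //; apply: IH.
by split=> //; rewrite eg ez -!kmulA (cG0 a ha).
Qed.

Lemma addition_foundation_kiso_prod (G0 H : G -> Prop) :
  addition G0 -> foundation H -> kiso_prod H G0.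
Proof. by move=> addG0 fH; apply/cdprod_kiso_prod/addition_foundation_cdprod. Qed.

(* Two foundations are complements of one and the same addition. *)
Lemma foundations_kiso (H1 H2 : G -> Prop) :
  foundation H1 -> foundation H2 -> kiso_sub H1 H2.
Proof.
move=> fH1 fH2; have [G0 [addG0 _]] := fH1.
apply: (cdprod_complement_iso (addition_foundation_cdprod addG0 fH2)).
exact: addition_foundation_cdprod addG0 fH1.
Qed.

(* In a regular group, two additions are complements of one foundation. *)
Lemma additions_kiso (A1 A2 : G -> Prop) :
  regular G -> addition A1 -> addition A2 -> kiso_sub A1 A2.
Proof.
move=> [H [G0 HG0]] addA1 addA2.
have fH : foundation H by exists G0.
apply: (cdprod_complement_iso (cdprod_sym (addition_foundation_cdprod addA2 fH))).
exact/cdprod_sym/addition_foundation_cdprod.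
Qed.
End KGroupTheory.

Theorem mainTheorem10 (K : idomainType) (bin : K -> nat -> K)
    (hchar : char_zero K) (hbin : binomial_coeffs bin)
    (hpid : principal_ideal_domain K)
    (G : KGroup bin) (hfg : fin_gen G) (hreg : regular G) :
  (forall (G0 H : G -> Prop), addition G0 -> foundation H -> kiso_prod H G0) /\
  (forall (H1 H2 : G -> Prop), foundation H1 -> foundation H2 -> kiso_sub H1 H2) /\
  (forall (A1 A2 : G -> Prop), addition A1 -> addition A2 -> kiso_sub A1 A2).
Proof.
split; first exact: addition_foundation_kiso_prod.
by split=> [|A1 A2]; [exact: foundations_kiso | exact: additions_kiso].
Qed.
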